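(* Let $V\subseteq\mathbb{R}^n$ be a set with at least two points such that $|v-v'|\geq1$ for all distinct $v,v'\in V$. Suppose there are lines $\ell_1,\ell_2$ and a number $0\leq\alpha\leq1/16$ such that $\mathrm{dist}(v,\ell_i)\leq\alpha$ for all $v\in V$ and $i=1,2$. Let $\pi_i$ be the orthogonal projection onto $\ell_i$. Then there are identifications of $\ell_1$ and $\ell_2$ with $\mathbb{R}$ such that $\pi_1(v')\leq\pi_1(v'')$ if and only if $\pi_2(v')\leq\pi_2(v'')$ for all $v',v''\in V$. If $v_1,v_2$ are consecutive points of $V$ with respect to the order of $\pi_1(V)$, then $\mathcal{H}^1([u_1,u_2])<(1+3\alpha^2)\,\mathcal{H}^1([\pi_1(u_1),\pi_1(u_2)])$ for every segment $[u_1,u_2]\subseteq[v_1,v_2]$. Moreover, $\mathcal{H}^1([y_1,y_2])<(1+12\alpha^2)\,\mathcal{H}^1([\pi_1(y_1),\pi_1(y_2)])$ for every segment $[y_1,y_2]\subseteq\ell_2$.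
   Context: $[a,b]$ denotes the closed line segment from $a$ to $b$; $\mathcal{H}^1$ is one-dimensional Hausdorff measure. *)

From HB Require Import structures.
From mathcomp Require Import all_boot all_order all_algebra.
From mathcomp Require Import all_classical all_reals all_analysis.
Set Implicit Arguments. Unset Strict Implicit. Unset Printing Implicit Defensive.
Import Order.TTheory GRing.Theory Num.Theory.
Local Open Scope classical_set_scope.
Local Open Scope ring_scope.

Section Defs.
Variables (R : realType) (n : nat).
Notation vec := 'rV[R]_n.

Definition dotv (u v : vec) : R := \sum_(i < n) u 0 i * v 0 i.
Definition enorm (u : vec) : R := Num.sqrt (dotv u u).

(* the line through p with direction d (d <> 0 is assumed where used) *)
Definition line (p d : vec) : set vec := [set p + t *: d | t in [set: R]].

Definition dist_set (v : vec) (A : set vec) : R :=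
  inf [set enorm (v - w) | w in A].

Definition proj_line (p d : vec) (x : vec) : vec :=
  p + (dotv (x - p) d / dotv d d) *: d.

Definition segment (a b : vec) : set vec :=
  [set (1 - t) *: a + t *: b | t in `[0, 1]%classic].

Definition line_identification (L : set vec) (phi : vec -> R) : Prop :=
  (forall x y, L x -> L y -> `|phi x - phi y| = enorm (x - y)) /\
  (forall r : R, exists2 x, L x & phi x = r).

(* diameter (in \bar R), with diam of the empty set = 0 *)
Definition diam (A : set vec) : \bar R :=
  ereal_sup ([set 0%E] `|`
    [set r | exists x y, A x /\ A y /\ r = (enorm (x - y))%:E]).

Definition H1_delta (A : set vec) (delta : R) : \bar R :=
  ereal_inf [set s | exists C : nat -> set vec,
    A `<=` \bigcup_i C i /\ (forall i, (diam (C i) <= delta%:E)%E) /\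
    s = (\sum_(0 <= i <oo) diam (C i))%E].

Definition H1 (A : set vec) : \bar R :=
  ereal_sup [set H1_delta A delta | delta in [set d : R | 0 < d]].

End Defs.

From HB Require Import structures.
From mathcomp Require Import all_boot all_order all_algebra.
From mathcomp Require Import all_classical all_reals all_analysis.
From mathcomp Require Import ring lra.
Import Order.TTheory GRing.Theory Num.Theory.
Local Open Scope classical_set_scope.
Local Open Scope ring_scope.

(* Write [perp_sq d w] for the squared distance from [w] to the line spanned by
   [d].  Two points of [V] lie within [alpha] of a line, so their difference
   [w] has [perp_sq d w <= 4 alpha^2] while [|w| >= 1]: all differences of
   points of [V] are almost parallel to both lines.  For two such differences
   [w], [e] this forces [(w.d) (e.d) (w.e) > 0] for [d = d1] and [d = d2], so the
   sign of [w.d1] determines the sign of [w.d2] up to one global sign, which is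
   absorbed in the identification of the second line with [R].
   Since [H^1] of a segment is its length (cover by short pieces for one
   inequality, push covers to [R] by a 1-Lipschitz map and compare with
   Lebesgue measure for the other), the length estimates reduce to
   [|w|^2 < c^2 (w.d1)^2 / |d1|^2]: for [w] a difference of points of [V] with
   [c = 1 + 3 alpha^2], and for [w = d2] with [c = 1 + 12 alpha^2], because the
   projections to [l2] of two points of [V] are [2 alpha]-close to [l1] and at
   least [1 - 2 alpha] apart. *)

Section InnerProduct.
Context {R : realType} {n : nat}.
Notation vec := 'rV[R]_n.
Implicit Types (u v w : vec) (a : R).

Lemma dotvC u v : dotv u v = dotv v u.
Proof. by apply: eq_bigr => i _; rewrite mulrC. Qed.

Lemma dotvDl u v w : dotv (u + v) w = dotv u w + dotv v w.
Proof. by rewrite /dotv -big_split; apply: eq_bigr => i _; rewrite !mxE mulrDl. Qed.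

Lemma dotvZl a u w : dotv (a *: u) w = a * dotv u w.
Proof. by rewrite /dotv mulr_sumr; apply: eq_bigr => i _; rewrite !mxE mulrA. Qed.

Lemma dotvNl u w : dotv (- u) w = - dotv u w.
Proof. by rewrite -scaleN1r dotvZl mulN1r. Qed.

Lemma dotvBl u v w : dotv (u - v) w = dotv u w - dotv v w.
Proof. by rewrite dotvDl dotvNl. Qed.

Lemma dotvDr u v w : dotv w (u + v) = dotv w u + dotv w v.
Proof. by rewrite dotvC dotvDl !(dotvC w). Qed.

Lemma dotvZr a u w : dotv w (a *: u) = a * dotv w u.
Proof. by rewrite dotvC dotvZl dotvC. Qed.

Lemma dotvNr u w : dotv w (- u) = - dotv w u.
Proof. by rewrite dotvC dotvNl dotvC. Qed.

Lemma dotvBr u v w : dotv w (u - v) = dotv w u - dotv w v.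
Proof. by rewrite dotvDr dotvNr. Qed.

Lemma dotv0l u : dotv 0 u = 0.
Proof. by rewrite -(scale0r (0 : vec)) dotvZl mul0r. Qed.

Lemma dotv0r u : dotv u 0 = 0.
Proof. by rewrite dotvC dotv0l. Qed.

Definition dotvE :=
  (dotvDl, dotvDr, dotvZl, dotvZr, dotvNl, dotvNr, dotvBl, dotvBr, dotv0l, dotv0r).

Lemma dotv_ge0 u : 0 <= dotv u u.
Proof. by apply: sumr_ge0 => i _; rewrite -expr2 sqr_ge0. Qed.

Lemma dotv_gt0 {u} : u != 0 -> 0 < dotv u u.
Proof.
apply: contraNT; rewrite -leNgt => u_le0; apply/eqP/rowP => i; rewrite mxE.
have /psumr_eq0P dot0 : dotv u u = 0 by apply/le_anti; rewrite u_le0 dotv_ge0.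
by apply/eqP; rewrite -sqrf_eq0 expr2 dot0 // => j _; rewrite -expr2 sqr_ge0.
Qed.

Lemma dotv_subZ u v a :
  dotv (u - a *: v) (u - a *: v) = dotv u u - 2 * a * dotv u v + a ^+ 2 * dotv v v.
Proof. by rewrite !dotvE (dotvC v u); ring. Qed.

Lemma cauchy_schwarz u v : dotv u v ^+ 2 <= dotv u u * dotv v v.
Proof.
have [->|v0] := eqVneq v 0; first by rewrite !dotv0r expr0n mulr0.
have vv_gt0 := dotv_gt0 v0.
have := dotv_ge0 (u - (dotv u v / dotv v v) *: v); rewrite dotv_subZ.
have -> : dotv u u - 2 * (dotv u v / dotv v v) * dotv u v
    + (dotv u v / dotv v v) ^+ 2 * dotv v v
    = (dotv u u * dotv v v - dotv u v ^+ 2) / dotv v v.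
  by field; rewrite gt_eqF.
by rewrite pmulr_lge0 ?invr_gt0 // subr_ge0.
Qed.

Lemma enorm_ge0 u : 0 <= enorm u.
Proof. exact: sqrtr_ge0. Qed.

Lemma enorm_gt0 {u} : u != 0 -> 0 < enorm u.
Proof. by move=> u0; rewrite sqrtr_gt0 dotv_gt0. Qed.

Lemma enorm_sqr u : enorm u ^+ 2 = dotv u u.
Proof. by rewrite sqr_sqrtr // dotv_ge0. Qed.

Lemma enorm_le_sqr u a : 0 <= a -> (enorm u <= a) = (dotv u u <= a ^+ 2).
Proof. by move=> a0; rewrite -ler_sqr ?nnegrE ?enorm_ge0 // enorm_sqr. Qed.

Lemma enorm_ge_sqr u a : 0 <= a -> (a <= enorm u) = (a ^+ 2 <= dotv u u).
Proof. by move=> a0; rewrite -ler_sqr ?nnegrE ?enorm_ge0 // enorm_sqr. Qed.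

Lemma enormZ a u : enorm (a *: u) = `|a| * enorm u.
Proof.
by rewrite /enorm dotvZl dotvZr mulrA -expr2 sqrtrM ?sqr_ge0 // sqrtr_sqr.
Qed.

Lemma enormN u : enorm (- u) = enorm u.
Proof. by rewrite -scaleN1r enormZ normrN1 mul1r. Qed.

Lemma enormB u v : enorm (u - v) = enorm (v - u).
Proof. by rewrite -enormN opprB. Qed.

Lemma normr_dotv_le u v : `|dotv u v| <= enorm u * enorm v.
Proof.
rewrite -ler_sqr ?nnegrE ?mulr_ge0 ?enorm_ge0 // real_normK ?num_real //.
by rewrite exprMn !enorm_sqr cauchy_schwarz.
Qed.

Lemma ler_enormD u v : enorm (u + v) <= enorm u + enorm v.
Proof.
rewrite enorm_le_sqr ?addr_ge0 ?enorm_ge0 // !dotvE (dotvC v u) sqrrD !enorm_sqr.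
have := ler_norm (dotv u v); have := normr_dotv_le u v; lra.
Qed.

Lemma ler_enormB u v : enorm (u - v) <= enorm u + enorm v.
Proof. by rewrite -(enormN v) ler_enormD. Qed.

End InnerProduct.

Section Estimates.
Context {R : realFieldType}.
Implicit Types (a b r z E P : R).

Lemma mulrDr_gt0 a b : b ^+ 2 < a ^+ 2 -> 0 < a * (a + b).
Proof. by move=> ba; have := sqr_ge0 (a + b); nra. Qed.

Lemma ge0_iff_sgr_mul x1 x2 y1 y2 z : 0 < x1 * y1 * z -> 0 < x2 * y2 * z ->
  (0 <= x1 <-> 0 <= Num.sg (y1 * y2) * x2).
Proof.
move=> h1 h2; have y_neq0 : y1 * y2 != 0.
  by rewrite mulf_neq0 //; [move: h1 | move: h2]; apply: contraTneq => ->;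
    rewrite !(mulr0, mul0r) ltxx.
have xy_gt0 : 0 < x1 * x2 * (y1 * y2).
  have := mulr_gt0 h1 h2; have := sqr_ge0 z; nra.
have : 0 < x1 * (Num.sg (y1 * y2) * x2).
  have y_gt0 : 0 < `|y1 * y2| by rewrite normr_gt0.
  rewrite -(pmulr_lgt0 _ y_gt0) normrEsg.
  have -> : x1 * (Num.sg (y1 * y2) * x2) * (Num.sg (y1 * y2) * (y1 * y2)) =
      x1 * x2 * (y1 * y2) * Num.sg (y1 * y2) ^+ 2 by ring.
  by rewrite sqr_sg y_neq0 mulr1.
by split=> ?; nra.
Qed.

Lemma chord_estimate a E P : 0 < a -> a <= 1 / 16 -> 1 <= E -> P <= 4 * a ^+ 2 ->
  E < (1 + 3 * a ^+ 2) ^+ 2 * (E - P).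
Proof.
move=> a_gt0 a_le; set s := a ^+ 2.
have s_gt0 : 0 < s by rewrite exprn_gt0.
have s_le : s <= 1 / 256 by rewrite /s expr2; nra.
nra.
Qed.

Lemma direction_estimate a E P r : 0 < a -> a <= 1 / 16 ->
  (1 - 2 * a) ^+ 2 <= r ^+ 2 * E -> r ^+ 2 * P <= 16 * a ^+ 2 ->
  E < (1 + 12 * a ^+ 2) ^+ 2 * (E - P).
Proof.
move=> a_gt0 a_le hE hP; set s := a ^+ 2; set c := (1 + 12 * s) ^+ 2.
have s_gt0 : 0 < s by rewrite exprn_gt0.
have s_le : s <= 1 / 256 by rewrite /s expr2; nra.
have c1 : c - 1 = 24 * s + 144 * s ^+ 2 by rewrite /c; ring.
have gap : 49 / 64 <= (1 - 2 * a) ^+ 2 by rewrite expr2; nra.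
have key : 16 * s * c < (c - 1) * (1 - 2 * a) ^+ 2.
  rewrite c1; have s2_le : s ^+ 2 <= s / 256 by rewrite expr2; nra.
  nra.
have r2_gt0 : 0 < r ^+ 2.
  rewrite lt_neqAle sqr_ge0 andbT eq_sym; apply: contraTneq hE => ->.
  by rewrite mul0r -ltNge exprn_gt0 //; lra.
suff : r ^+ 2 * (c * P) < r ^+ 2 * ((c - 1) * E) by rewrite ltr_pM2l //; lra.
have c1_ge0 : 0 <= c - 1 by rewrite c1; nra.
have hcP : c * (r ^+ 2 * P) <= c * (16 * s) by rewrite ler_wpM2l //; lra.
have hcE : (c - 1) * (1 - 2 * a) ^+ 2 <= (c - 1) * (r ^+ 2 * E) by rewrite ler_wpM2l.
lra.
Qed.

End Estimates.

Section Projection.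
Context {R : realType} {n : nat}.
Notation vec := 'rV[R]_n.
Implicit Types (w x y z d e p : vec) (a c s t : R).

Definition perp_sq d w : R := dotv w w - dotv w d ^+ 2 / dotv d d.

Lemma perp_sqE d w : d != 0 ->
  perp_sq d w = dotv (w - (dotv w d / dotv d d) *: d) (w - (dotv w d / dotv d d) *: d).
Proof.
move=> d0; have dd_gt0 := dotv_gt0 d0.
by rewrite /perp_sq !dotvE (dotvC d w); field; rewrite gt_eqF.
Qed.

Lemma perp_sq_ge0 d w : d != 0 -> 0 <= perp_sq d w.
Proof. by move=> d0; rewrite perp_sqE // dotv_ge0. Qed.

Lemma perp_sqZ d s w : perp_sq d (s *: w) = s ^+ 2 * perp_sq d w.
Proof. by rewrite /perp_sq !dotvE; ring. Qed.

Lemma dotv_sign_agree d w e c : d != 0 -> 2 * c < 1 ->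
  1 <= dotv w w -> 1 <= dotv e e -> perp_sq d w <= c -> perp_sq d e <= c ->
  0 < dotv w d * dotv e d * dotv w e.
Proof.
move=> d0 c_lt w_ge e_ge w_perp e_perp; have dd_gt0 := dotv_gt0 d0.
have c_ge0 : 0 <= c := le_trans (perp_sq_ge0 d w d0) w_perp.
pose A := dotv w d * dotv e d / dotv d d.
pose w' := w - (dotv w d / dotv d d) *: d; pose e' := e - (dotv e d / dotv d d) *: d.
have we_split : dotv w e = A + dotv w' e'.
  by rewrite /A /w' /e' !dotvE (dotvC d e); field; rewrite gt_eqF.
have B_le : dotv w' e' ^+ 2 <= c ^+ 2.
  apply: le_trans (cauchy_schwarz w' e') _.
  by rewrite -!perp_sqE // expr2 ler_pM ?perp_sq_ge0.
have A_gt : c ^+ 2 < A ^+ 2.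
  have -> : A ^+ 2 = (dotv w w - perp_sq d w) * (dotv e e - perp_sq d e).
    by rewrite /perp_sq !subKr /A; field; rewrite gt_eqF.
  by rewrite expr2 ltr_pM //; lra.
have -> : dotv w d * dotv e d * dotv w e = A * dotv w e * dotv d d.
  by rewrite /A; field; rewrite gt_eqF.
by rewrite mulr_gt0 // we_split mulrDr_gt0 //; apply: le_lt_trans B_le A_gt.
Qed.

Lemma line_sub {p d x y} : line p d x -> line p d y -> exists s, y - x = s *: d.
Proof.
move=> [t _ <-] [t' _ <-]; exists (t' - t).
by rewrite opprD addrACA subrr add0r scalerBl.
Qed.

Lemma proj_line_on p d x : line p d (proj_line p d x).
Proof. by exists (dotv (x - p) d / dotv d d). Qed.

Lemma proj_lineB p d x y :
  proj_line p d x - proj_line p d y = (dotv (x - y) d / dotv d d) *: d.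
Proof.
rewrite /proj_line opprD addrACA subrr add0r -scalerBl -mulrBl -dotvBl.
by rewrite opprB addrA subrK.
Qed.

Lemma dotv_proj_line p d x : d != 0 ->
  dotv (proj_line p d x - p) d = dotv (x - p) d.
Proof.
move=> d0; rewrite /proj_line addrAC subrr add0r dotvZl mulfVK //.
by rewrite gt_eqF ?dotv_gt0.
Qed.

Lemma dotv_sub_proj_line p d x : d != 0 ->
  dotv (x - proj_line p d x) (x - proj_line p d x) = perp_sq d (x - p).
Proof. by move=> d0; rewrite perp_sqE // /proj_line opprD addrA. Qed.

Lemma enorm_sub_proj_line_le p {d} x {w} : d != 0 -> line p d w ->
  enorm (x - proj_line p d x) <= enorm (x - w).
Proof.
move=> d0 [t _ <-]; have dd_gt0 := dotv_gt0 d0.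
rewrite enorm_le_sqr ?enorm_ge0 // enorm_sqr dotv_sub_proj_line // opprD addrA.
rewrite dotv_subZ /perp_sq -subr_ge0.
set z := dotv (x - p) d; set D := dotv d d.
have -> : dotv (x - p) (x - p) - 2 * t * z + t ^+ 2 * D
    - (dotv (x - p) (x - p) - z ^+ 2 / D) = (t * D - z) ^+ 2 / D.
  by field; rewrite gt_eqF.
by rewrite divr_ge0 ?sqr_ge0 // ltW.
Qed.

Lemma dist_set_line p d x : d != 0 ->
  dist_set x (line p d) = enorm (x - proj_line p d x).
Proof.
move=> d0; apply/le_anti/andP; split.
  apply: ge_inf; last by exists (proj_line p d x); first exact: proj_line_on.
  by exists 0 => _ [w _ <-]; exact: enorm_ge0.
apply: lb_le_inf => [|_ [w lw <-]]; last exact: enorm_sub_proj_line_le.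
by exists (enorm (x - p)), p => //; exists 0; rewrite ?scale0r ?addr0.
Qed.

Lemma perp_sq_sub_le p {d} x y : d != 0 ->
  perp_sq d (y - x) <=
  (enorm (x - proj_line p d x) + enorm (y - proj_line p d y)) ^+ 2.
Proof.
move=> d0; rewrite perp_sqE // -enorm_sqr.
have -> : y - x - (dotv (y - x) d / dotv d d) *: d =
    (y - proj_line p d y) - (x - proj_line p d x).
  by rewrite -(proj_lineB p) !opprB addrACA (addrC (- x)) -addrACA.
by rewrite ler_sqr ?nnegrE ?addr_ge0 ?enorm_ge0 // [leRHS]addrC ler_enormB.
Qed.

Lemma perp_sq_near_line_le p d x y a : d != 0 ->
  enorm (x - proj_line p d x) <= a -> enorm (y - proj_line p d y) <= a ->
  perp_sq d (y - x) <= 4 * a ^+ 2.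
Proof.
move=> d0 hx hy; apply: le_trans (perp_sq_sub_le p _ _ d0) _.
have := enorm_ge0 (x - proj_line p d x); have := enorm_ge0 (y - proj_line p d y).
nra.
Qed.

Lemma dist_proj_line_le p {d} x y : d != 0 ->
  enorm (y - proj_line p d y) <= enorm (y - x) + enorm (x - proj_line p d x).
Proof.
move=> d0; apply: le_trans (enorm_sub_proj_line_le p y d0 (proj_line_on p d x)) _.
have -> : y - proj_line p d x = (y - x) + (x - proj_line p d x) by rewrite addrA subrK.
exact: ler_enormD.
Qed.

End Projection.

Lemma unit_itv_cover {R : realType} (N : nat) (t : R) : (0 < N)%N -> 0 <= t <= 1 ->
  exists2 k, (k < N)%N & k%:R / N%:R <= t <= k.+1%:R / N%:R.
Proof.
move=> N_gt0 /andP[t_ge0 t_le1]; have N_gt0' : 0 < N%:R :> R by rewrite ltr0n.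
have [->|t_neq1] := eqVneq t 1.
  exists N.-1; first by rewrite prednK ?leqnn.
  rewrite prednK // divff ?gt_eqF // lexx andbT ler_pdivrMr // mul1r ler_nat.
  exact: leq_pred.
have tN_ge0 : 0 <= t * N%:R by rewrite mulr_ge0 // ltW.
exists (Num.truncn (t * N%:R)).
  by rewrite truncn_lt_nat // -[ltRHS]mul1r ltr_pM2r // lt_neqAle t_neq1.
have /andP[tr_le tr_gt] := truncn_itv tN_ge0.
by rewrite ler_pdivrMr // ler_pdivlMr // tr_le ltW.
Qed.

Section Segment.
Context {R : realType} {n : nat}.
Notation vec := 'rV[R]_n.
Implicit Types (a b x y : vec).

Lemma segmentE a b : segment a b = [set a + t *: (b - a) | t in `[0, 1]].
Proof.
apply/seteqP; split=> _ [t t01 <-]; exists t => //;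
  by rewrite scalerBl scale1r scalerBr addrAC addrA.
Qed.

Lemma segment_start a b : segment a b a.
Proof.
rewrite segmentE; exists 0; first by rewrite /= in_itv /= lexx ler01.
by rewrite scale0r addr0.
Qed.

Lemma segment_end a b : segment a b b.
Proof.
rewrite segmentE; exists 1; first by rewrite /= in_itv /= lexx ler01.
by rewrite scale1r addrC subrK.
Qed.

Lemma segment_sub {a b x y} : segment a b x -> segment a b y ->
  exists s, y - x = s *: (b - a).
Proof.
rewrite segmentE => -[t _ <-] [t' _ <-]; exists (t' - t).
by rewrite opprD addrACA subrr add0r scalerBl.
Qed.

End Segment.

Section Diameter.
Context {R : realType} {n : nat}.
Notation vec := 'rV[R]_n.
Local Open Scope ereal_scope.

Lemma diam_ge0 (A : set vec) : 0 <= diam A.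
Proof. by apply: ereal_sup_ubound; left. Qed.

Lemma diam_ge {A : set vec} {x y} : A x -> A y -> (enorm (x - y))%:E <= diam A.
Proof. by move=> Ax Ay; apply: ereal_sup_ubound; right; exists x, y. Qed.

Lemma diam_le (A : set vec) (r : R) : (0 <= r)%R ->
  (forall x y, A x -> A y -> (enorm (x - y) <= r)%R) -> diam A <= r%:E.
Proof.
move=> r0 Ar; apply: ge_ereal_sup => _ [->|[x [y [Ax [Ay ->]]]]].
  by rewrite lee_fin.
by rewrite lee_fin Ar.
Qed.

Lemma diam0 : diam (@set0 vec) = 0.
Proof. by apply/le_anti; rewrite diam_ge0 andbT diam_le. Qed.

Lemma diam_affine_image_le (a b : vec) (I : set R) (h : R) : (0 <= h)%R ->
  (forall s t, I s -> I t -> (`|t - s| <= h)%R) ->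
  diam [set (a + t *: (b - a))%R | t in I] <= (enorm (b - a) * h)%:E.
Proof.
move=> h0 Ih; apply: diam_le => [|_ _ [t It <-] [s Is <-]].
  by rewrite mulr_ge0 ?enorm_ge0.
rewrite opprD addrACA subrr add0r -scalerBl enormZ mulrC.
by rewrite ler_wpM2l ?enorm_ge0 ?Ih.
Qed.

End Diameter.

Section SegmentMeasure.
Context {R : realType} {n : nat}.
Notation vec := 'rV[R]_n.
Local Open Scope ereal_scope.

Lemma H1_delta_segment_le (a b : vec) (delta : R) : (0 < delta)%R ->
  H1_delta (segment a b) delta <= (enorm (b - a))%:E.
Proof.
move=> delta_gt0; set L := enorm (b - a).
set N := (Num.truncn (L / delta)).+1.
have N_gt0 : (0 < N%:R :> R)%R by rewrite ltr0n.
have LN_le : (L / N%:R <= delta)%R.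
  rewrite (ler_pdivrMr _ _ N_gt0) mulrC -ler_pdivrMr //; exact/ltW/truncnS_gt.
pose C k : set vec := if (k < N)%N then
  [set (a + t *: (b - a))%R | t in `[(k%:R / N%:R)%R, (k.+1%:R / N%:R)%R]]
  else set0.
have C_diam k : diam (C k) <= (L / N%:R)%:E.
  rewrite /C; case: ifP => _; last by rewrite diam0 lee_fin divr_ge0 ?enorm_ge0 ?ltW.
  apply: diam_affine_image_le => [|s t]; first by rewrite invr_ge0 ltW.
  rewrite /= !in_itv /= ler_norml => /andP[s1 s2] /andP[t1 t2].
  have width : (k.+1%:R / N%:R - k%:R / N%:R = N%:R^-1 :> R)%R.
    by rewrite -mulrBl -natr1 addrAC subrr add0r mul1r.
  apply/andP; split; lra.
apply: ge_ereal_inf; exists (\sum_(0 <= i <oo) diam (C i)).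
  exists C; split; last by split=> // i; rewrite (le_trans (C_diam i)) ?lee_fin.
  rewrite segmentE => _ [t /= + <-]; rewrite in_itv /= => t01.
  have [k kN kt] := unit_itv_cover N t isT t01.
  by exists k => //; rewrite /C kN; exists t; rewrite //= in_itv.
rewrite (nneseries_split 0 N) => [|k _]; last exact: diam_ge0.
rewrite add0n eseries0 ?adde0 => [|k Nk _]; last by rewrite /C ltnNge Nk diam0.
apply: le_trans (_ : _ <= \sum_(0 <= k < N) (L / N%:R)%:E) _; first exact: lee_sum.
by rewrite sumEFin sumr_const_nat subn0 -[(_ *+ N)%R]mulr_natr divfK ?gt_eqF.
Qed.

Lemma lipschitz_image_in_interval (C : set vec) (f : vec -> R) :
  (forall x y, (`|f x - f y| <= enorm (x - y))%R) ->
  exists I : set R, [/\ measurable I, f @` C `<=` I & lebesgue_measure I <= diam C].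
Proof.
move=> f_lip; have [[x0 Cx0]|/forallNP C0] := pselect (exists x, C x); last first.
  exists set0; split => //; last by rewrite measure0 diam_ge0.
  by move=> y [x Cx _]; have := C0 x.
case Cd: (diam C) => [r| |]; last 2 first.
- by exists setT; split => //; rewrite leey.
- by have := diam_ge0 C; rewrite Cd.
have C_lip x y : C x -> C y -> (f x - r <= f y)%R.
  move=> Cx Cy; have := diam_ge Cx Cy; rewrite Cd lee_fin => /(le_trans (f_lip x y)).
  by rewrite ler_norml => /andP[_]; lra.
have fC_lb : has_lbound (f @` C) by exists (f x0 - r)%R => _ [y Cy <-]; exact: C_lip.
pose c := inf (f @` C).
exists `[c, (c + r)%R]%classic; split; first exact: measurable_itv.
  move=> _ [x Cx <-]; rewrite /= in_itv /= ge_inf //=; last by exists x.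
  have : (f x - r <= c)%R.
    by apply: lb_le_inf; [exists (f x0), x0 | move=> _ [y Cy <-]; exact: C_lip].
  lra.
rewrite lebesgue_measure_itv /= lte_fin; case: ifP => _; last by rewrite -Cd diam_ge0.
by rewrite -EFinD addrAC subrr add0r.
Qed.

Lemma H1_segment_ge (a b : vec) : (enorm (b - a))%:E <= H1 (segment a b).
Proof.
set L := enorm (b - a).
apply: (@le_trans _ _ (H1_delta (segment a b) 1)); last first.
  by apply: ereal_sup_ubound; exists 1%R => //=.
apply: le_ereal_inf_tmp => _ [C [ab_cover [_ ->]]].
have [L0|L_neq0] := eqVneq L 0%R.
  by rewrite L0 nneseries_ge0 // => i _ _; exact: diam_ge0.
have L_gt0 : (0 < L)%R by rewrite lt_neqAle eq_sym L_neq0 enorm_ge0.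
pose f x := (dotv (x - a) (b - a) / L)%R.
have f_lip x y : (`|f x - f y| <= enorm (x - y))%R.
  rewrite /f -mulrBl -dotvBl opprB addrA subrK normrM normfV (gtr0_norm L_gt0).
  by rewrite ler_pdivrMr // normr_dotv_le.
have [I /all_and3[I_meas fCI I_le]] :=
  choice (fun i => lipschitz_image_in_interval (C i) f f_lip).
have cover0L : `[0%R, L]%classic `<=` \bigcup_i I i.
  move=> r; rewrite /= in_itv /= => /andP[r_ge0 r_leL].
  have ab_r : segment a b (a + (r / L) *: (b - a))%R.
    rewrite segmentE; exists (r / L)%R => //.
    by rewrite /= in_itv /= divr_ge0 ?ler_pdivrMr ?mul1r // ltW.
  have [i _ Ci] := ab_cover _ ab_r; exists i => //; apply: fCI.
  exists (a + (r / L) *: (b - a))%R => //.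
  by rewrite /f addrAC subrr add0r dotvZl -enorm_sqr -/L; field.
have := measure_sigma_subadditive lebesgue_measure I_meas (measurable_itv _) cover0L.
have := lebesgue_measure_itv `[0%R, L]; rewrite /= lte_fin L_gt0 oppr0 adde0.
move=> <- /le_trans; apply.
exact: lee_nneseries.
Qed.

Lemma H1_segment (a b : vec) : H1 (segment a b) = (enorm (b - a))%:E.
Proof.
apply/le_anti; rewrite H1_segment_ge andbT.
by apply: ge_ereal_sup => _ [delta /= delta_gt0 <-]; exact: H1_delta_segment_le.
Qed.

End SegmentMeasure.

Lemma H1_segment_lt_proj {R : realType} {n : nat} (p d u1 u2 w : 'rV[R]_n) (s c : R) :
  d != 0 -> 0 <= c -> u1 != u2 ->
  u2 - u1 = s *: w -> dotv w w < c ^+ 2 * (dotv w d ^+ 2 / dotv d d) ->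
  (H1 (segment u1 u2) < c%:E * H1 (segment (proj_line p d u1) (proj_line p d u2)))%E.
Proof.
move=> d0 c_ge0 u12 u21 w_steep; have dd_gt0 := dotv_gt0 d0.
have s2_gt0 : 0 < s ^+ 2.
  rewrite exprn_even_gt0 //; apply: contraNneq u12 => s0.
  by rewrite eq_sym -subr_eq0 u21 s0 scale0r.
rewrite !H1_segment -EFinM lte_fin proj_lineB u21.
rewrite -ltr_sqr ?nnegrE ?mulr_ge0 ?enorm_ge0 // exprMn !enorm_sqr !dotvE.
have -> : s * dotv w d / dotv d d * (s * dotv w d / dotv d d * dotv d d) =
    s ^+ 2 * (dotv w d ^+ 2 / dotv d d) by field; rewrite gt_eqF.
by rewrite mulrA -expr2 mulrCA ltr_pM2l.
Qed.

Section LineCoordinate.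
Context {R : realType} {n : nat}.
Notation vec := 'rV[R]_n.
Implicit Types (x y d p : vec) (k : R).

Lemma line_identification_coord p d k : d != 0 -> k ^+ 2 = 1 ->
  line_identification (line p d) (fun x => k * dotv (x - p) d / enorm d).
Proof.
move=> d0 k2; have d_gt0 := enorm_gt0 d0.
have dd : dotv d d = enorm d ^+ 2 by rewrite enorm_sqr.
have k1 : `|k| = 1 by rewrite -sqrtr_sqr k2 sqrtr1.
split=> [_ _ [t _ <-] [s _ <-]|r].
  rewrite !(addrC p) !addrK opprD addrACA subrr addr0 -[t *: d - s *: d]scalerBl enormZ.
  rewrite !dotvZl dd.
  have -> : k * (t * enorm d ^+ 2) / enorm d - k * (s * enorm d ^+ 2) / enorm d =
      k * ((t - s) * enorm d) by field; rewrite gt_eqF.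
  by rewrite normrM k1 mul1r normrM (gtr0_norm d_gt0).
exists (p + (k * r / enorm d) *: d); first by exists (k * r / enorm d).
rewrite (addrC p) addrK dotvZl dd.
have -> : k * (k * r / enorm d * enorm d ^+ 2) / enorm d = k ^+ 2 * r.
  by field; rewrite gt_eqF.
by rewrite k2 mul1r.
Qed.

Lemma line_coord_le p d k x y : d != 0 ->
  (k * dotv (x - p) d / enorm d <= k * dotv (y - p) d / enorm d) =
  (0 <= k * dotv (y - x) d).
Proof.
move=> d0; rewrite -subr_ge0 -mulrBl -mulrBr -dotvBl opprB addrA subrK.
by rewrite pmulr_lge0 // invr_gt0 enorm_gt0.
Qed.

End LineCoordinate.

Section NearLine.
Context {R : realType} {n : nat} {V : set 'rV[R]_n} {p d : 'rV[R]_n} {a : R}.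
Hypotheses (V_sep : forall v v', V v -> V v' -> v != v' -> 1 <= enorm (v - v'))
  (d_neq0 : d != 0) (a_gt0 : 0 < a) (a_le : a <= 1 / 16)
  (V_near : forall v, V v -> dist_set v (line p d) <= a).

Lemma sep_dotv_ge1 {v v'} : V v -> V v' -> v != v' -> 1 <= dotv (v' - v) (v' - v).
Proof.
move=> Vv Vv' vv'; rewrite -(expr1n R 2) -enorm_ge_sqr // enormB.
by rewrite V_sep // eq_sym.
Qed.

Lemma near_proj_le {v} : V v -> enorm (v - proj_line p d v) <= a.
Proof. by move=> Vv; rewrite -dist_set_line // V_near. Qed.

Lemma near_perp_sq_le {v v'} : V v -> V v' -> perp_sq d (v' - v) <= 4 * a ^+ 2.
Proof.
by move=> Vv Vv'; exact: perp_sq_near_line_le d_neq0 (near_proj_le Vv) (near_proj_le Vv').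
Qed.

Lemma near_dotv_sign {v v' u u'} : V v -> V v' -> V u -> V u' -> v != v' -> u != u' ->
  0 < dotv (v' - v) d * dotv (u' - u) d * dotv (v' - v) (u' - u).
Proof.
move=> Vv Vv' Vu Vu' vv' uu'; apply: (@dotv_sign_agree _ _ d _ _ (4 * a ^+ 2)) => //;
  rewrite ?sep_dotv_ge1 ?near_perp_sq_le //.
have := ler_pM (ltW a_gt0) (ltW a_gt0) a_le a_le; rewrite -expr2; lra.
Qed.

Lemma chord_proj_lt {v v'} : V v -> V v' -> v != v' ->
  dotv (v' - v) (v' - v) <
  (1 + 3 * a ^+ 2) ^+ 2 * (dotv (v' - v) d ^+ 2 / dotv d d).
Proof.
move=> Vv Vv' vv'; rewrite -[_ / _](subKr (dotv (v' - v) (v' - v))).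
by apply: chord_estimate; rewrite ?sep_dotv_ge1 ?near_perp_sq_le.
Qed.

End NearLine.

Section TwoLines.
Context {R : realType} {n : nat} {V : set 'rV[R]_n} {p1 d1 p2 d2 : 'rV[R]_n} {a : R}.
Hypotheses (V_sep : forall v v', V v -> V v' -> v != v' -> 1 <= enorm (v - v'))
  (d1_neq0 : d1 != 0) (d2_neq0 : d2 != 0) (a_gt0 : 0 < a) (a_le : a <= 1 / 16)
  (V_near1 : forall v, V v -> dist_set v (line p1 d1) <= a)
  (V_near2 : forall v, V v -> dist_set v (line p2 d2) <= a).
Local Notation pi1 := (proj_line p1 d1).
Local Notation pi2 := (proj_line p2 d2).

Lemma proj2_near_line1 {v} : V v -> enorm (pi2 v - pi1 (pi2 v)) <= 2 * a.
Proof.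
move=> Vv; apply: le_trans (dist_proj_line_le p1 v (pi2 v) d1_neq0) _.
have := near_proj_le d1_neq0 V_near1 Vv; have := near_proj_le d2_neq0 V_near2 Vv.
rewrite enormB; lra.
Qed.

Lemma proj2_far {v0 v1} : V v0 -> V v1 -> v0 != v1 -> 1 - 2 * a <= enorm (pi2 v1 - pi2 v0).
Proof.
move=> Vv0 Vv1 v01; have sep : 1 <= enorm (v1 - v0) by rewrite V_sep // eq_sym.
have tri : enorm (v1 - v0) <=
    enorm (v1 - pi2 v1) + enorm (pi2 v1 - pi2 v0) + enorm (pi2 v0 - v0).
  have -> : v1 - v0 = (v1 - pi2 v1) + (pi2 v1 - pi2 v0) + (pi2 v0 - v0).
    by rewrite [_ + (_ - pi2 v0)]addrA subrK addrA subrK.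
  by apply: le_trans (ler_enormD _ _) _; rewrite lerD2r ler_enormD.
have := near_proj_le d2_neq0 V_near2 Vv0; have := near_proj_le d2_neq0 V_near2 Vv1.
rewrite (enormB (pi2 v0)) in tri; lra.
Qed.

Lemma direction_proj_lt {v0 v1} : V v0 -> V v1 -> v0 != v1 ->
  dotv d2 d2 < (1 + 12 * a ^+ 2) ^+ 2 * (dotv d2 d1 ^+ 2 / dotv d1 d1).
Proof.
move=> Vv0 Vv1 v01; have a2_le1 : 0 <= 1 - 2 * a by move: a_le; lra.
have far := proj2_far Vv0 Vv1 v01.
have perp_le : perp_sq d1 (pi2 v1 - pi2 v0) <= 16 * a ^+ 2.
  rewrite (_ : 16 * a ^+ 2 = 4 * (2 * a) ^+ 2); last by ring.
  exact: perp_sq_near_line_le d1_neq0 (proj2_near_line1 Vv0) (proj2_near_line1 Vv1).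
rewrite proj_lineB in perp_le far.
set r := dotv (v1 - v0) d2 / dotv d2 d2 in perp_le far.
rewrite -[_ / _](subKr (dotv d2 d2)); apply: (@direction_estimate _ a _ _ r) => //.
  have r_d2 : dotv (r *: d2) (r *: d2) = r ^+ 2 * dotv d2 d2.
    by rewrite dotvZl dotvZr mulrA -expr2.
  by rewrite -r_d2 -enorm_ge_sqr.
by rewrite -/(perp_sq d1 d2) -perp_sqZ.
Qed.

Lemma proj_order_agree {v0 v1} : V v0 -> V v1 -> v0 != v1 ->
  exists phi1 phi2 : 'rV[R]_n -> R,
    line_identification (line p1 d1) phi1 /\
    line_identification (line p2 d2) phi2 /\
    forall v' v'', V v' -> V v'' ->
      (phi1 (pi1 v') <= phi1 (pi1 v'') <-> phi2 (pi2 v') <= phi2 (pi2 v'')).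
Proof.
move=> Vv0 Vv1 v01; set e := v1 - v0.
have sign1 := near_dotv_sign V_sep d1_neq0 a_gt0 a_le V_near1.
have sign2 := near_dotv_sign V_sep d2_neq0 a_gt0 a_le V_near2.
have e_d_neq0 : dotv e d1 * dotv e d2 != 0.
  rewrite mulf_neq0 //; [move: (sign1 _ _ _ _ Vv0 Vv1 Vv0 Vv1 v01 v01)
    | move: (sign2 _ _ _ _ Vv0 Vv1 Vv0 Vv1 v01 v01)];
  by apply: contraTneq => ->; rewrite !mul0r ltxx.
pose s := Num.sg (dotv e d1 * dotv e d2).
exists (fun x => 1 * dotv (x - p1) d1 / enorm d1), (fun x => s * dotv (x - p2) d2 / enorm d2).
split; first by apply: line_identification_coord; rewrite ?expr1n.
split; first by apply: line_identification_coord; rewrite // /s sqr_sg e_d_neq0.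
move=> v' v'' Vv' Vv''; rewrite !dotv_proj_line // !line_coord_le // mul1r.
have [->|v'v''] := eqVneq v' v''; first by rewrite subrr !dotv0l mulr0.
exact: ge0_iff_sgr_mul (sign1 _ _ _ _ Vv' Vv'' Vv0 Vv1 v'v'' v01)
  (sign2 _ _ _ _ Vv' Vv'' Vv0 Vv1 v'v'' v01).
Qed.

End TwoLines.

Theorem lemma8p3 (R : realType) (n : nat) (V : set 'rV[R]_n)
  (p1 d1 p2 d2 : 'rV[R]_n) (alpha : R) :
  (exists v v', V v /\ V v' /\ v != v') ->
  (forall v v', V v -> V v' -> v != v' -> 1 <= enorm (v - v')) ->
  d1 != 0 -> d2 != 0 ->
  0 < alpha -> alpha <= 1 / 16 ->
  (forall v, V v -> dist_set v (line p1 d1) <= alpha) ->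
  (forall v, V v -> dist_set v (line p2 d2) <= alpha) ->
  let pi1 := proj_line p1 d1 in
  let pi2 := proj_line p2 d2 in
  (exists phi1 phi2 : 'rV[R]_n -> R,
      line_identification (line p1 d1) phi1 /\
      line_identification (line p2 d2) phi2 /\
      forall v' v'', V v' -> V v'' ->
        (phi1 (pi1 v') <= phi1 (pi1 v'') <-> phi2 (pi2 v') <= phi2 (pi2 v''))) /\
  (forall v1 v2, V v1 -> V v2 -> v1 != v2 ->
     (* v1, v2 consecutive w.r.t. the order of pi1(V) along line p1 d1 *)
     ~ (exists v, V v /\
          ((dotv (pi1 v1) d1 < dotv (pi1 v) d1 < dotv (pi1 v2) d1) \/
           (dotv (pi1 v2) d1 < dotv (pi1 v) d1 < dotv (pi1 v1) d1))) ->
     forall u1 u2, u1 != u2 -> segment u1 u2 `<=` segment v1 v2 ->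
       (H1 (segment u1 u2) <
        (1 + 3 * alpha ^+ 2)%:E * H1 (segment (pi1 u1) (pi1 u2)))%E) /\
  (forall y1 y2, y1 != y2 -> segment y1 y2 `<=` line p2 d2 ->
     (H1 (segment y1 y2) <
      (1 + 12 * alpha ^+ 2)%:E * H1 (segment (pi1 y1) (pi1 y2)))%E).
Proof.
move=> [v0 [v1 [Vv0 [Vv1 v01]]]] V_sep d1_neq0 d2_neq0 a_gt0 a_le V_near1 V_near2 pi1 pi2.
rewrite {}/pi1 {}/pi2.
have c_ge0 (k : nat) : 0 <= 1 + k%:R * alpha ^+ 2.
  by rewrite addr_ge0 ?ler01 // mulr_ge0 ?ler0n ?sqr_ge0.
have [phi1 [phi2 agree]] :=
  proj_order_agree V_sep d1_neq0 d2_neq0 a_gt0 a_le V_near1 V_near2 Vv0 Vv1 v01.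
split; first by exists phi1, phi2.
split=> [va vb Va Vb vab _ u1 u2 u12 u_sub | y1 y2 y12 y_sub].
  have [s us] := segment_sub (u_sub _ (segment_start u1 u2)) (u_sub _ (segment_end u1 u2)).
  exact: H1_segment_lt_proj d1_neq0 (c_ge0 3) u12 us
    (chord_proj_lt V_sep d1_neq0 a_gt0 a_le V_near1 Va Vb vab).
have [s ys] := line_sub (y_sub _ (segment_start y1 y2)) (y_sub _ (segment_end y1 y2)).
exact: H1_segment_lt_proj d1_neq0 (c_ge0 12) y12 ys
  (direction_proj_lt V_sep d1_neq0 d2_neq0 a_gt0 a_le V_near1 V_near2 Vv0 Vv1 v01).
Qed.
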